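(* Let $n$ be odd and $f:\mathbb{F}_{2^n}\to\mathbb{F}_{2^n}$ be almost bent, and let $k=\max\{\omega(a): a\in\mathbb{F}_{2^n}\}$. Then \[|\mathrm{Im}(f)|\leq 2^n-\frac{k-1}{k}2^{(n+1)/2}.\] In particular, if $f$ is not a permutation, then $|\mathrm{Im}(f)|\leq 2^n-2^{(n-1)/2}$.
   Context: $\mathrm{Tr}$ is the absolute trace, $W_f(b,a)=\sum_{x}(-1)^{\mathrm{Tr}(bf(x)+ax)}$. For $n$ odd, $f$ is almost bent if $W_f(b,a)\in\{0,\pm2^{(n+1)/2}\}$ for all $b\in\mathbb{F}_{2^n}^*$, $a\in\mathbb{F}_{2^n}$. $\omega(a)=|f^{-1}(\{a\})|$. *)

(* F_{2^n} is modelled as an arbitrary finite field F of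
   characteristic 2 with #|F| = 2^n. *)
From mathcomp Require Import all_boot all_order all_algebra all_field.
Set Implicit Arguments. Unset Strict Implicit. Unset Printing Implicit Defensive.
Import Order.TTheory GRing.Theory Num.Theory.
Local Open Scope ring_scope.

Definition absTr (F : finFieldType) (n : nat) (x : F) : F :=
  \sum_(i < n) x ^+ (2 ^ i).

(* (-1)^{Tr y} as an integer; Tr y is 0 or 1 in F_2 *)
Definition sgnTr (F : finFieldType) (n : nat) (y : F) : int :=
  if absTr n y == 0 then 1 else -1.

Definition walsh (F : finFieldType) (n : nat) (f : F -> F) (b a : F) : int :=
  \sum_(x : F) sgnTr n (b * f x + a * x).

Definition almost_bent (F : finFieldType) (n : nat) (f : F -> F) : Prop :=
  forall b a : F, b != 0 ->
    walsh n f b a \in [:: 0; (2 ^ ((n + 1) %/ 2))%:Z; - (2 ^ ((n + 1) %/ 2))%:Z].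

Definition omega (F : finFieldType) (f : F -> F) (a : F) : nat :=
  #|[set x | f x == a]|.

Definition imf (F : finFieldType) (f : F -> F) : {set F} := [set f x | x in F].

(* Let g(y) = omega(y) - 1 be the excess of the fibre of f over y and
   g^(b) = sum_y g(y) (-1)^Tr(b y) its Fourier transform.  Since
   x |-> (-1)^Tr(x) is a nontrivial additive character (the trace is additive
   in characteristic 2, idempotent, and not identically zero), the usual
   orthogonality, inversion and Parseval identities hold.  For b <> 0,
   g^(b) = W_f(b, 0), so almost bentness gives |g^(b)| in {0, E} with
   E = 2^((n+1)/2), E^2 = 2^(n+1).  Writing N for the number of b with
   g^(b) <> 0 and M = 2^n - |Im f|:
   - Parseval gives sum_y g(y)^2 = 2 N;
   - a pointwise bound on fibres gives sum_y g(y)^2 <= k M;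
   - inversion at a largest fibre gives 2^n (k - 1) <= E N.
   Combining, (k - 1) E <= k M, which is the theorem; for a non-injective f
   we have k >= 2, whence M >= E / 2 = 2^((n-1)/2). *)

From mathcomp Require Import all_boot all_order all_algebra all_field zify.
Import Order.TTheory GRing.Theory Num.Theory.
Local Open Scope ring_scope.
Set Implicit Arguments. Unset Strict Implicit. Unset Printing Implicit Defensive.

Section TraceCharacter.

Variables (F : finFieldType) (n : nat).
Hypothesis char2 : 2%N \in [pchar F].
Hypothesis cardF : #|F| = (2 ^ n)%N.

Lemma frobenius2D (i : nat) (x y : F) :
  (x + y) ^+ (2 ^ i) = x ^+ (2 ^ i) + y ^+ (2 ^ i).
Proof. by apply: exprDn_pchar; rewrite pnatX pnatE // char2. Qed.

Lemma absTrD (x y : F) : absTr n (x + y) = absTr n x + absTr n y.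
Proof. by rewrite /absTr -big_split; apply: eq_bigr => i _; apply: frobenius2D. Qed.

(* Squaring permutes the conjugates x^(2^i) cyclically, since x^(2^n) = x. *)
Lemma absTr_sqr (x : F) : absTr n x ^+ 2 = absTr n x.
Proof.
have sqrD u v : (u + v) ^+ 2 = u ^+ 2 + v ^+ 2 := frobenius2D 1 u v.
have sqr_sum m : (\sum_(i < m) x ^+ (2 ^ i)) ^+ 2 = \sum_(i < m) x ^+ (2 ^ i.+1).
  elim: m => [|m IH]; first by rewrite !big_ord0 expr0n.
  by rewrite !big_ord_recr /= sqrD IH -exprM expnS mulnC.
rewrite /absTr sqr_sum; case: n cardF => [|m] cardFm; first by rewrite !big_ord0.
rewrite big_ord_recr /= big_ord_recl /= -cardFm expf_card expn0 expr1 addrC.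
by congr (_ + _); apply: eq_bigr.
Qed.

Lemma absTr01 (x : F) : absTr n x = 0 \/ absTr n x = 1.
Proof.
have : absTr n x * (absTr n x - 1) = 0 by rewrite mulrBr mulr1 -expr2 absTr_sqr subrr.
by move/eqP; rewrite mulf_eq0 subr_eq0 => /orP[] /eqP; [left | right].
Qed.

Lemma sgnTrD (x y : F) : sgnTr n (x + y) = sgnTr n x * sgnTr n y.
Proof.
rewrite /sgnTr absTrD; have two0 : (1 + 1 : F) = 0 by rewrite addrr_pchar2.
by case: (absTr01 x) => ->; case: (absTr01 y) => ->;
  rewrite ?addr0 ?add0r ?two0 ?eqxx ?oner_eq0.
Qed.

Lemma sgnTr0 : sgnTr n (0 : F) = 1.
Proof. by rewrite /sgnTr /absTr big1 ?eqxx // => i _; rewrite expr0n expn_eq0. Qed.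

Lemma normr_sgnTr (x : F) : `|sgnTr n x| = 1.
Proof. by rewrite /sgnTr; case: (_ == _); rewrite ?normrN normr1. Qed.

Lemma size_trace_poly (m : nat) :
  size (\sum_(i < m.+1) 'X^(2 ^ i) : {poly F}) = (2 ^ m).+1.
Proof.
elim: m => [|m IH]; first by rewrite big_ord1 size_polyXn.
by rewrite big_ord_recr /= addrC size_polyDl size_polyXn // IH ltnS ltn_exp2l.
Qed.

(* The trace is not identically zero: a nonzero polynomial of degree 2^(n-1)
   cannot vanish at all 2^n points of F (and n > 0 as F has two elements). *)
Lemma exists_absTr_neq0 : exists z : F, absTr n z != 0.
Proof.
case: n cardF => [|m] cardFm; first by have := finNzRing_gt1 F; rewrite cardFm.
apply/existsP; apply: contraT => /existsPn traceF0.
pose p : {poly F} := \sum_(i < m.+1) 'X^(2 ^ i).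
have p_eval x : p.[x] = absTr m.+1 x.
  by rewrite horner_sum; apply: eq_bigr => i _; rewrite hornerXn.
have p_neq0 : p != 0 by rewrite -size_poly_eq0 size_trace_poly.
have rootsF : all (root p) (enum F).
  by apply/allP => x _; rewrite /root p_eval; have := traceF0 x; rewrite negbK.
have := max_poly_roots p_neq0 rootsF (enum_uniq F).
by rewrite size_trace_poly -cardE cardFm ltnS leqNgt ltn_exp2l // ltnSn.
Qed.

Lemma sum_sgnTr_mul (u : F) :
  \sum_(b : F) sgnTr n (b * u) = if u == 0 then (2 ^ n)%N%:Z else 0.
Proof.
have [->|u_neq0] := eqVneq u 0.
  under eq_bigr do rewrite mulr0 sgnTr0.
  by rewrite sumr_const -cardF -natz.
have [z trace_z] := exists_absTr_neq0.
set S := \sum_b _; suff : S = - S by lia.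
rewrite {1}/S (reindex_inj (addIr (z / u))) /=.
under eq_bigr do rewrite mulrDl divfK // sgnTrD {2}/sgnTr (negPf trace_z).
by rewrite -big_distrl /= mulrN1.
Qed.

End TraceCharacter.

Lemma sum_indicator (T : finType) (A : {set T}) :
  \sum_(x : T) ((x \in A) : nat)%:Z = #|A|%:Z.
Proof.
by rewrite -sum1_card -natz natr_sum [RHS]big_mkcond; apply: eq_bigr => x _; case: (x \in A).
Qed.

Section FibreSpectrum.

Variables (F : finFieldType) (n : nat) (f : F -> F).

Lemma sum_comp_fibres (h : F -> int) :
  \sum_(x : F) h (f x) = \sum_(y : F) (omega f y)%:Z * h y.
Proof.
rewrite (partition_big f predT) //=; apply: eq_bigr => y _.
rewrite (eq_bigr (fun _ => h y)); last by move=> x /eqP ->.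
by rewrite sumr_const /omega -natz mulr_natl cardsE.
Qed.

Lemma omega_eq0 (y : F) : (omega f y == 0%N) = (y \in ~: imf f).
Proof.
rewrite /omega cards_eq0 in_setC; apply/eqP/negP => [fibre0 /imsetP[x _ fx]|y_out].
  have : x \in [set x | f x == y] by rewrite inE fx.
  by rewrite fibre0 inE.
apply/setP => x; rewrite !inE; apply/negP => /eqP fx.
by apply: y_out; apply/imsetP; exists x.
Qed.

Definition fibre_excess (y : F) : int := (omega f y)%:Z - 1.

Definition excess_hat (b : F) : int :=
  \sum_(y : F) fibre_excess y * sgnTr n (b * y).

(* The fibres partition F, so the excess has mean zero. *)
Lemma sum_fibre_excess : \sum_(y : F) fibre_excess y = 0.
Proof.
rewrite /fibre_excess sumrB [X in _ - X](sum_comp_fibres (fun _ => 1)).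
by under [X in _ - X]eq_bigr do rewrite mulr1; rewrite subrr.
Qed.

Lemma excess_hat0 : excess_hat 0 = 0.
Proof.
rewrite /excess_hat; under eq_bigr do rewrite mul0r sgnTr0 mulr1.
exact: sum_fibre_excess.
Qed.

(* Fibres outside the image have excess -1, fibres inside it have excess at
   most k - 1; this bounds the energy of g by k times the codomain defect. *)
Lemma sum_fibre_excess_sqr_le (k : nat) : (forall y, (omega f y <= k)%N) ->
  \sum_(y : F) fibre_excess y ^+ 2 <= k%:Z * #|~: imf f|%:Z.
Proof.
move=> omega_le; rewrite -sum_indicator.
have -> : \sum_y fibre_excess y ^+ 2 = \sum_y (fibre_excess y ^+ 2 + fibre_excess y).
  by rewrite big_split /= sum_fibre_excess addr0.
have -> : k%:Z * \sum_y ((y \in ~: imf f) : nat)%:Z =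
          \sum_y k%:Z * (fibre_excess y + ((y \in ~: imf f) : nat)%:Z).
  by rewrite -big_distrr big_split /= sum_fibre_excess add0r.
apply: ler_sum => y _; rewrite -omega_eq0 /fibre_excess.
by have := omega_le y; case: (omega f y) => [|w] /= w_le; rewrite expr2; nia.
Qed.

Section CharTwo.

Hypothesis char2 : 2%N \in [pchar F].
Hypothesis cardF : #|F| = (2 ^ n)%N.

Lemma walsh_excess_hat (b : F) : b != 0 -> walsh n f b 0 = excess_hat b.
Proof.
move=> b_neq0; rewrite /walsh; under eq_bigr do rewrite mul0r addr0.
rewrite (sum_comp_fibres (fun y => sgnTr n (b * y))) /excess_hat /fibre_excess.
under [X in _ = X]eq_bigr do rewrite mulrBl mul1r.
rewrite sumrB; under [X in _ - X]eq_bigr do rewrite mulrC.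
by rewrite (sum_sgnTr_mul char2 cardF) (negPf b_neq0) subr0.
Qed.

Lemma excess_inversion (y0 : F) :
  \sum_(b : F) excess_hat b * sgnTr n (b * y0) = (2 ^ n)%N%:Z * fibre_excess y0.
Proof.
under eq_bigr do rewrite big_distrl /=.
rewrite exchange_big /=.
under eq_bigr => y _.
  under eq_bigr do rewrite -mulrA -sgnTrD // -mulrDr.
  rewrite -big_distrr /= (sum_sgnTr_mul char2 cardF) addr_eq0 (oppr_pchar2 char2).
  over.
rewrite /= (bigD1 y0) //= eqxx big1 ?addr0 1?mulrC // => y /negPf ->.
by rewrite mulr0.
Qed.

Lemma excess_parseval :
  \sum_(b : F) excess_hat b ^+ 2 = (2 ^ n)%N%:Z * \sum_(y : F) fibre_excess y ^+ 2.
Proof.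
under eq_bigr do rewrite expr2 {2}/excess_hat big_distrr /=.
rewrite exchange_big big_distrr /=; apply: eq_bigr => y _.
under eq_bigr do rewrite mulrCA.
by rewrite -big_distrr /= excess_inversion mulrCA expr2.
Qed.

End CharTwo.

End FibreSpectrum.

Lemma noninjective_fibre (F : finFieldType) (f : F -> F) :
  ~ injective f -> exists y, (2 <= omega f y)%N.
Proof.
move=> not_inj.
case: (pickP (fun p : F * F => (f p.1 == f p.2) && (p.1 != p.2)))
  => [[x1 x2] /andP[/eqP f12 x12] | no_collision]; last first.
  case: not_inj => x1 x2 f12; apply/eqP.
  by apply: (contraFT _ (no_collision (x1, x2))) => x12 /=; rewrite f12 eqxx x12.
exists (f x1); apply: (@leq_trans #|[set x1; x2]|); first by rewrite cards2 x12.
by apply/subset_leq_card/subsetP => x; rewrite !inE => /orP[] /eqP ->; rewrite ?f12.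
Qed.

Lemma odd_half_succ (n : nat) : odd n -> ((n + 1) %/ 2 = ((n - 1) %/ 2).+1)%N.
Proof. by move=> odd_n; have := modn2 n; rewrite odd_n; lia. Qed.

Lemma amplitude_sqr (n : nat) : odd n ->
  (2 ^ ((n + 1) %/ 2) * 2 ^ ((n + 1) %/ 2) = 2 * 2 ^ n)%N.
Proof.
move=> odd_n; rewrite -expnD -expnS; congr (2 ^ _)%N.
by have := modn2 n; rewrite odd_n; lia.
Qed.

Section AlmostBent.

Variables (F : finFieldType) (n : nat) (f : F -> F).
Hypothesis char2 : 2%N \in [pchar F].
Hypothesis cardF : #|F| = (2 ^ n)%N.
Hypothesis odd_n : odd n.
Hypothesis bent : almost_bent n f.

Local Notation E := (2 ^ ((n + 1) %/ 2))%N.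
Local Notation g := (fibre_excess f).
Local Notation ghat := (excess_hat n f).

Definition excess_support : {set F} := [set b | ghat b != 0].

Lemma norm_excess_hat (b : F) : `|ghat b| = E%:Z * ((b \in excess_support) : nat)%:Z.
Proof.
rewrite inE; have [->|b_neq0] := eqVneq b 0; first by rewrite excess_hat0 normr0 eqxx mulr0.
have := bent 0 b_neq0; rewrite (walsh_excess_hat f char2 cardF b_neq0) !inE.
have E_gt0 : (0 < E)%N by rewrite expn_gt0.
by case/or3P => /eqP ->; rewrite ?normrN ?oppr_eq0 ?eqxx /=; lia.
Qed.

(* By Parseval, the energy of g counts the support: sum g^2 = 2 #supp. *)
Lemma energy_excess_support :
  \sum_(y : F) g y ^+ 2 = 2 * #|excess_support|%:Z.
Proof.
have pow_neq0 : (2 ^ n)%N%:Z != 0 by rewrite eqz_nat expn_eq0.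
apply: (mulfI pow_neq0); rewrite -excess_parseval //.
under eq_bigr do rewrite -(real_normK (num_real _)) norm_excess_hat exprMn.
have indicator_sqr b : ((b \in excess_support) : nat)%:Z ^+ 2 = ((b \in excess_support) : nat)%:Z.
  by case: (_ \in _).
under eq_bigr do rewrite indicator_sqr.
rewrite -big_distrr /= sum_indicator expr2 -PoszM amplitude_sqr //.
by rewrite !PoszM -mulrA mulrCA.
Qed.

(* By inversion and the triangle inequality, 2^n g(y0) <= E #supp. *)
Lemma excess_le_support (y0 : F) :
  (2 ^ n)%N%:Z * g y0 <= E%:Z * #|excess_support|%:Z.
Proof.
rewrite -(excess_inversion f char2 cardF) -sum_indicator big_distrr /=.
apply: le_trans (ler_norm _) _; apply: le_trans (ler_norm_sum _ _ _) _.
apply: ler_sum => b _.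
by rewrite normrM normr_sgnTr mulr1 norm_excess_hat.
Qed.

Lemma codomain_defect_bound :
  ((\max_(a : F) omega f a - 1) * E <= (\max_(a : F) omega f a) * #|~: imf f|)%N.
Proof.
set k := (\max_(a : F) omega f a)%N; have omega_le y : (omega f y <= k)%N by exact: leq_bigmax.
have [y0 k_eq] : {y0 : F | k = omega f y0} by apply: bigop.eq_bigmax; rewrite cardF expn_gt0.
have energy_le := sum_fibre_excess_sqr_le omega_le.
have inv_le := excess_le_support y0.
rewrite energy_excess_support /fibre_excess -k_eq in energy_le inv_le.
have P_gt0 : (0 < 2 ^ n)%N by rewrite expn_gt0.
have amplitude2 := amplitude_sqr odd_n.
(* 2^n (k - 1) E <= E^2 #supp = 2^n (2 #supp) <= 2^n k #(~: Im f). *)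
set M := #|~: imf f| in energy_le *; set N := #|excess_support| in energy_le inv_le.
nia.
Qed.

End AlmostBent.

Lemma rat_image_bound (P E M I k : nat) :
  (I + M = P)%N -> ((k - 1) * E <= k * M)%N ->
  (I%:R : rat) <= P%:R - (k%:R - 1) / k%:R * E%:R.
Proof.
move=> split_P defect; have -> : I = (P - M)%N by lia.
have M_le_P : (M <= P)%N by lia.
rewrite natrB // lerD2l lerN2.
have [->|k_gt0] := posnP k; first by rewrite invr0 mulr0 mul0r ler0n.
by rewrite mulrAC ler_pdivrMr ?ltr0n // -(natrB _ k_gt0) -!natrM ler_nat [(M * _)%N]mulnC.
Qed.

Unset Implicit Arguments.

Theorem theorem7p2 (F : finFieldType) (n : nat) (f : F -> F) :
  (2%N \in [pchar F]) -> #|F| = (2 ^ n)%N -> odd n -> almost_bent n f ->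
  let k := (\max_(a : F) omega f a)%N in
  ((#|imf f|)%:R : rat) <= 2%:R ^+ n - (k%:R - 1) / k%:R * 2%:R ^+ ((n + 1) %/ 2)
  /\ (~ injective f -> (#|imf f| <= 2 ^ n - 2 ^ ((n - 1) %/ 2))%N).
Proof.
move=> char2 cardF odd_n bent k.
have defect := codomain_defect_bound char2 cardF odd_n bent; rewrite -/k in defect.
have card_split : (#|imf f| + #|~: imf f| = 2 ^ n)%N by rewrite cardsC cardF.
split; first by rewrite -!natrX; apply: rat_image_bound card_split defect.
move=> /noninjective_fibre [y big_fibre].
have k_gt1 : (1 < k)%N := leq_trans big_fibre (leq_bigmax y).
(* With E = 2 * 2^((n-1)/2) and k >= 2, the defect is at least 2^((n-1)/2). *)
rewrite (odd_half_succ odd_n) expnS in defect; nia.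
Qed.
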